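(* Let $-1<\gamma<1$, $d>0$, $k>0$, $\alpha\in\mathbb{R}$, $\delta\in[0,2\pi)$, and let $$I(\phi)=\frac{1}{1+e^{k\left(\cos(\delta/2)-\cos(\phi-\alpha-\delta/2)\right)}}.$$ Consider the system $$\dot\phi_1=\gamma-\sin\phi_1+d\,I(\phi_2),\qquad \dot\phi_2=\gamma-\sin\phi_2+d\,I(\phi_1)$$ on the torus $(\mathbb{R}/2\pi\mathbb{Z})^2$. Then every equilibrium $(\phi_1,\phi_2)$ satisfies $\arcsin\gamma<\phi_{1,2}<\pi-\arcsin\gamma$, where each $\phi_i$ is taken modulo $2\pi$ as a point of the arc $(\arcsin\gamma,\ \arcsin\gamma+2\pi)$.
   Context: $\arcsin$ denotes the principal branch with values in $[-\pi/2,\pi/2]$. *)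

From Stdlib Require Export Reals.
Open Scope R_scope.

Definition I_fun (k alpha delta phi : R) : R :=
  1 / (1 + exp (k * (cos (delta / 2) - cos (phi - alpha - delta / 2)))).

Definition rhs1 (gamma d k alpha delta phi1 phi2 : R) : R :=
  gamma - sin phi1 + d * I_fun k alpha delta phi2.
Definition rhs2 (gamma d k alpha delta phi1 phi2 : R) : R :=
  gamma - sin phi2 + d * I_fun k alpha delta phi1.

Definition arc_rep (g phi psi : R) : Prop :=
  asin g < psi < asin g + 2 * PI /\ exists m : Z, psi = phi + 2 * PI * IZR m.

(* At an equilibrium, [sin phi_i = gamma + d I(phi_j) > gamma] because [d > 0] and the
   sigmoid [I] is positive.  On the arc [(a, a + 2 pi)] with [a = asin gamma], the set
   where [sin] exceeds [sin a] is exactly [(a, pi - a)]: by sum-to-product,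
   [sin psi - sin a = 2 cos ((psi + a)/2) sin ((psi - a)/2)], whose second factor is
   positive on the arc and whose first factor is [<= 0] once [psi >= pi - a]. *)

From Stdlib Require Import Reals ZArith Lra Lia.
Open Scope R_scope.

Lemma sin_add_2PI_IZR (x : R) (m : Z) : sin (x + 2 * PI * IZR m) = sin x.
Proof.
  assert (Hnat : forall y n, sin (y + 2 * PI * INR n) = sin y).
  { intros y n; rewrite <- (sin_period y n); f_equal; ring. }
  destruct (Z.le_ge_cases 0 m) as [Hm | Hm].
  - rewrite <- (Z2Nat.id m Hm), <- INR_IZR_INZ; apply Hnat.
  - rewrite <- (Hnat (x + 2 * PI * IZR m) (Z.to_nat (- m))), INR_IZR_INZ,
      Z2Nat.id, opp_IZR by lia.
    f_equal; ring.
Qed.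

Lemma I_fun_pos (k alpha delta phi : R) : 0 < I_fun k alpha delta phi.
Proof.
  unfold I_fun; apply Rdiv_lt_0_compat; [lra |].
  pose proof (exp_pos (k * (cos (delta / 2) - cos (phi - alpha - delta / 2)))); lra.
Qed.

Lemma sin_gt_of_equilibrium (gamma d k alpha delta phi phi' : R) :
  0 < d -> gamma - sin phi + d * I_fun k alpha delta phi' = 0 -> gamma < sin phi.
Proof.
  intros hd heq; pose proof (I_fun_pos k alpha delta phi').
  assert (0 < d * I_fun k alpha delta phi') by (apply Rmult_lt_0_compat; lra).
  lra.
Qed.

Lemma lt_PI_sub_of_sin_lt (a psi : R) :
  - (PI / 2) <= a <= PI / 2 -> a < psi < a + 2 * PI -> sin a < sin psi ->
  psi < PI - a.
Proof.
  intros ha hpsi hsin.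
  destruct (Rlt_or_le psi (PI - a)) as [hlt | hge]; [exact hlt | exfalso].
  assert (hcos : cos ((psi + a) / 2) <= 0) by (apply cos_le_0; lra).
  assert (hsin_half : 0 < sin ((psi - a) / 2)) by (apply sin_gt_0; lra).
  pose proof (form4 psi a); nra.
Qed.

Lemma arc_rep_bounds_of_sin_gt (gamma phi psi : R) :
  -1 < gamma < 1 -> gamma < sin phi -> arc_rep gamma phi psi ->
  asin gamma < psi < PI - asin gamma.
Proof.
  intros hg hsin [hpsi [m ->]].
  split; [lra |].
  apply lt_PI_sub_of_sin_lt; [apply asin_bound | exact hpsi |].
  rewrite sin_add_2PI_IZR, sin_asin; lra.
Qed.

Theorem mainTheorem5 (gamma d k alpha delta : R)
  (hg : -1 < gamma < 1) (hd : 0 < d) (hk : 0 < k)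
  (hdelta : 0 <= delta < 2 * PI)
  (phi1 phi2 : R)
  (heq1 : rhs1 gamma d k alpha delta phi1 phi2 = 0)
  (heq2 : rhs2 gamma d k alpha delta phi1 phi2 = 0) :
  forall psi1 psi2 : R,
    arc_rep gamma phi1 psi1 -> arc_rep gamma phi2 psi2 ->
    (asin gamma < psi1 < PI - asin gamma) /\
    (asin gamma < psi2 < PI - asin gamma).
Proof.
  intros psi1 psi2 hpsi1 hpsi2.
  split; eapply arc_rep_bounds_of_sin_gt; eauto.
  - exact (sin_gt_of_equilibrium gamma d k alpha delta phi1 phi2 hd heq1).
  - exact (sin_gt_of_equilibrium gamma d k alpha delta phi2 phi1 hd heq2).
Qed.
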